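(* In the Setting below and under the Standing Assumption, let $x\in\mathbb{Q}\cap D$ be such that the Lyapunov exponent $\lambda(x)$ exists. Then for every $\varepsilon>0$ there exists $p_0\in\mathbb{Z}$ such that for all $p\ge p_0$, $$\sigma(x,p)\le\frac{1}{\ln 2}\max(0,\bar\lambda(x))+\varepsilon.$$
   Context: Setting. $D\subseteq\mathbb{R}$ is a compact interval and $f:D\to D$ is twice continuously differentiable on $D$ with $f''$ bounded. For $x\in D$ the orbit is $x_0=x$, $x_{n+1}=f(x_n)$. A floating-point number of precision $m$ is a real $s\cdot 2^{e-m}$ with $s,e\in\mathbb{Z}$, $|s|\le 2^m-1$; $rd_m(y)$ denotes rounding of $y$ to a nearest floating-point number of precision $m$. Let $L(a,e):=\sup\{|f'(y)|: y\in[a-e,a+e]\cap D\}$ and fix a function $\bar L$ with $L(a,e)\le\bar L(a,e)\le\min(\bar L_{max},\,L(a,e)+Ke)$ for constants $\bar L_{max},K\ge0$. For $x\in\mathbb{Q}\cap D$ and precision $m\ge1$ the computed sequence is $\hat x_0=rd_m(x)$, $\bar e_0=2^{-m}|\hat x_0|$, $\hat x_{n+1}=rd_m(f(\hat x_n))$, $\bar e_{n+1}=\bar L(\hat x_n,\bar e_n)\bar e_n+2^{-m}|\hat x_{n+1}|$ (all $\hat x_n$ assumed in $D$). For $N\in\mathbb{N}$, $p\in\mathbb{Z}$, $m_{min}(x,N,p)$ is the least $m\ge1$ such that the sequence computed at precision $m$ satisfies $\bar e_n\le\frac{10^{-p}}{1+10^{-p}}|\hat x_n|$ for all $n=0,\dots,N$.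 $\sigma(x,p):=\limsup_{N\to\infty} m_{min}(x,N,p)/N$. Standing Assumption: $x_n\ne0$ for all $n$ and $\lim_{N\to\infty}\mathrm{ld}(\min\{|x_n|:0\le n\le N\})/N=0$, $\mathrm{ld}=\log_2$. Lyapunov exponent: $\lambda(x):=\lim_{n\to\infty}\frac1n\sum_{k=0}^{n-1}\ln|f'(f^k(x))|$ when it exists. For $\alpha>0$, $\eta_\alpha(y)=\ln y$ if $y\ge\alpha$, $\eta_\alpha(y)=\ln\alpha$ if $0\le y<\alpha$; $\bar\lambda_\alpha(x):=\limsup_{n\to\infty}\frac1n\sum_{k=0}^{n-1}\eta_\alpha(|f'(f^k(x))|)$ and $\bar\lambda(x):=\lim_{\alpha\to0^+}\bar\lambda_\alpha(x)$. *)

From Stdlib Require Import Reals QArith Qreals ZArith.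
Open Scope R_scope.

Definition inD (a b y : R) : Prop := a <= y <= b.

Definition deriv_within (a b : R) (g : R -> R) (y l : R) : Prop :=
  forall eps, 0 < eps -> exists del, 0 < del /\
    forall z, inD a b z -> z <> y -> Rabs (z - y) < del ->
      Rabs ((g z - g y) / (z - y) - l) < eps.

Definition cont_within (a b : R) (g : R -> R) (y : R) : Prop :=
  forall eps, 0 < eps -> exists del, 0 < del /\
    forall z, inD a b z -> Rabs (z - y) < del -> Rabs (g z - g y) < eps.

Definition is_float (m : nat) (y : R) : Prop :=
  exists s e : Z, (Z.abs s <= 2 ^ (Z.of_nat m) - 1)%Z /\
    y = IZR s * powerRZ 2 (e - Z.of_nat m).

Definition is_rounding (rd : nat -> R -> R) : Prop :=
  forall m y, is_float m (rd m y) /\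
    forall z, is_float m z -> Rabs (rd m y - y) <= Rabs (z - y).

(* the set { |f'(y)| : y in [c-e,c+e] /\ D }, whose sup is L(c,e) *)
Definition Lset (a b : R) (f1 : R -> R) (c e : R) : R -> Prop :=
  fun z => exists y, inD a b y /\ c - e <= y <= c + e /\ z = Rabs (f1 y).

Definition valid_Lbar (a b : R) (f1 : R -> R) (Lbar : R -> R -> R) (Lmax K : R) : Prop :=
  forall c e l, is_lub (Lset a b f1 c e) l ->
    l <= Lbar c e /\ Lbar c e <= Rmin Lmax (l + K * e).

Fixpoint comp (f : R -> R) (rd : nat -> R -> R) (Lbar : R -> R -> R)
  (m : nat) (x : R) (n : nat) : R * R :=
  match n with
  | O => let xh := rd m x in (xh, Rabs xh / 2 ^ m)
  | S n' => let p := comp f rd Lbar m x n' in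
            let xh' := rd m (f (fst p)) in
            (xh', Lbar (fst p) (snd p) * snd p + Rabs xh' / 2 ^ m)
  end.

Definition xhat f rd Lbar m x n := fst (comp f rd Lbar m x n).
Definition ebar f rd Lbar m x n := snd (comp f rd Lbar m x n).

Definition tol (p : Z) : R := powerRZ 10 (- p) / (1 + powerRZ 10 (- p)).

Definition good f rd Lbar (x : R) (N : nat) (p : Z) (m : nat) : Prop :=
  forall n, (n <= N)%nat ->
    ebar f rd Lbar m x n <= tol p * Rabs (xhat f rd Lbar m x n).

Definition is_mmin f rd Lbar (x : R) (N : nat) (p : Z) (m : nat) : Prop :=
  (1 <= m)%nat /\ good f rd Lbar x N p m /\
  forall m', (1 <= m')%nat -> (m' < m)%nat -> ~ good f rd Lbar x N p m'.

(* sigma(x,p) = limsup_N m_min(x,N,p)/N  <=  s *)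
Definition sigma_le f rd Lbar (x : R) (p : Z) (s : R) : Prop :=
  forall del, 0 < del -> exists N0 : nat, forall N, (N0 <= N)%nat ->
    exists m, is_mmin f rd Lbar x N p m /\ INR m / INR N <= s + del.

Fixpoint orbit (f : R -> R) (x : R) (n : nat) : R :=
  match n with O => x | S n' => f (orbit f x n') end.

Fixpoint minabs (f : R -> R) (x : R) (N : nat) : R :=
  match N with
  | O => Rabs x
  | S N' => Rmin (minabs f x N') (Rabs (orbit f x N))
  end.

Definition ld (y : R) : R := ln y / ln 2.

Definition standing (f : R -> R) (x : R) : Prop :=
  (forall n, orbit f x n <> 0) /\
  Un_cv (fun N => ld (minabs f x N) / INR N) 0.

Fixpoint psum (g : nat -> R) (n : nat) : R :=
  match n with O => 0 | S n' => psum g n' + g n' end.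

Definition lyap_exists (f f1 : R -> R) (x : R) : Prop :=
  (forall k, f1 (orbit f x k) <> 0) /\
  exists lam, Un_cv (fun n => psum (fun k => ln (Rabs (f1 (orbit f x k)))) n / INR n) lam.

Definition eta (alpha y : R) : R := if Rle_dec alpha y then ln y else ln alpha.

Definition is_limsup (u : nat -> R) (l : R) : Prop :=
  (forall eps, 0 < eps -> exists N, forall n, (N <= n)%nat -> u n <= l + eps) /\
  (forall eps, 0 < eps -> forall N, exists n, (N <= n)%nat /\ l - eps <= u n).

(* lb = lambdabar(x) = lim_{alpha -> 0+} lambdabar_alpha(x) *)
Definition is_lambda_bar (f f1 : R -> R) (x lb : R) : Prop :=
  exists la : R -> R,
    (forall alpha, 0 < alpha ->
       is_limsup (fun n => psum (fun k => eta alpha (Rabs (f1 (orbit f x k)))) n / INR n)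
                 (la alpha)) /\
    (forall eps, 0 < eps -> exists del, 0 < del /\
       forall alpha, 0 < alpha < del -> Rabs (la alpha - lb) < eps).

(* The a-posteriori bound obeys e_(n+1) <= (|f'(x_n)| + (2B + K) e_n) e_n + M 2^-m
   with M = max(|a|, |b|): the first term propagates the error through the
   slope of f near the true orbit, the second accounts for rounding x_(n+1).
   Unrolling, e_n is at most M 2^-m times sums of products of the factors
   |f'(x_j)| + (2B + K) e_j.  Each is either within (1 + d) of |f'(x_j)|, or
   |f'(x_j)| is so small that the factor is O(e_j); as long as the e_j stay
   small the latter kind only shortens the product, so by induction
   e_n <= M 2^-m exp((max(0, lambda) + o(1)) N) for n <= N, using that the
   partial sums of ln|f'(x_j)| grow like lambda n.  The requirement
   e_n <= tol |xhat_n| then holds once 2^m exceeds this quantity divided by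
   min |x_n|, which the Standing Assumption makes subexponential.  Hence
   m_min(x, N, p) <= (max(0, lambda)/ln 2 + eps) N eventually, for every p,
   and lambda <= lambdabar(x) because eta_alpha dominates ln. *)

From Stdlib Require Import Reals QArith Qreals ZArith Lra Lia Classical ClassicalEpsilon.
Open Scope R_scope.

Lemma ln2_pos : 0 < ln 2.
Proof. rewrite <- ln_1. apply ln_increasing; lra. Qed.

Lemma ln2_lt_1 : ln 2 < 1.
Proof.
  rewrite <- (ln_exp 1). apply ln_increasing; [lra|].
  pose proof (exp_ineq1 1 ltac:(lra)). lra.
Qed.

Lemma ln_le x y : 0 < x -> x <= y -> ln x <= ln y.
Proof. intros H1 [H2|H2]; [left; apply ln_increasing; auto| right; subst; auto]. Qed.

Lemma exp_ge_1 x : 0 <= x -> 1 <= exp x.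
Proof. intros [H|<-]; [left; rewrite <- exp_0; apply exp_increasing; auto| rewrite exp_0; lra]. Qed.

Lemma exp_INR_mult (n : nat) x : exp (INR n * x) = exp x ^ n.
Proof.
  induction n; [simpl; rewrite Rmult_0_l, exp_0; auto|].
  rewrite S_INR, Rmult_plus_distr_r, exp_plus, IHn, Rmult_1_l. simpl. ring.
Qed.

Lemma pow2_ge_of_ld X (m : nat) : 0 < X -> ld X <= INR m -> X <= 2 ^ m.
Proof.
  unfold ld; intros HX Hm. pose proof ln2_pos.
  rewrite <- Rpower_pow by lra. unfold Rpower.
  rewrite <- (exp_ln X) at 1 by auto.
  assert (ln X <= INR m * ln 2).
  { apply Rmult_le_reg_r with (/ ln 2); [apply Rinv_0_lt_compat; lra|].
    rewrite Rmult_assoc, Rinv_r by lra. unfold Rdiv in Hm. lra. }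
  destruct H0; [left; apply exp_increasing; auto| right; f_equal; auto].
Qed.

Lemma inD_between a b u v t : inD a b u -> inD a b v -> Rmin u v <= t <= Rmax u v -> inD a b t.
Proof. unfold inD, Rmin, Rmax; intros; repeat destruct Rle_dec; lra. Qed.

Definition clamp (u v y : R) := Rmax u (Rmin v y).

Lemma clamp_lipschitz u v y z : u <= v -> Rabs (clamp u v y - clamp u v z) <= Rabs (y - z).
Proof.
  intros H; unfold clamp, Rmax, Rmin.
  repeat (destruct Rle_dec); unfold Rabs; repeat destruct Rcase_abs; lra.
Qed.

Lemma clamp_in u v y : u <= v -> u <= clamp u v y <= v.
Proof. intros; unfold clamp, Rmax, Rmin; repeat destruct Rle_dec; lra. Qed.

Lemma clamp_id u v y : u <= y <= v -> clamp u v y = y.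
Proof. intros; unfold clamp, Rmax, Rmin; repeat destruct Rle_dec; lra. Qed.

Lemma deriv_within_cont a b g y l : deriv_within a b g y l -> cont_within a b g y.
Proof.
  intros Hd eps Heps.
  destruct (Hd 1 Rlt_0_1) as [del [Hdel H]].
  assert (Hl : 0 < Rabs l + 1) by (pose proof (Rabs_pos l); lra).
  exists (Rmin del (eps / (Rabs l + 1))). split.
  { apply Rmin_pos; auto. apply Rdiv_lt_0_compat; auto. }
  intros z Hz Hzy.
  destruct (Req_dec z y) as [->|Hne].
  { rewrite Rminus_diag, Rabs_R0; auto. }
  pose proof (Rmin_l del (eps / (Rabs l + 1))). pose proof (Rmin_r del (eps / (Rabs l + 1))).
  specialize (H z Hz Hne ltac:(lra)).
  assert (Hq : Rabs ((g z - g y) / (z - y)) <= Rabs l + 1).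
  { pose proof (Rabs_triang_inv ((g z - g y) / (z - y)) l). lra. }
  replace (g z - g y) with ((g z - g y) / (z - y) * (z - y)) by (field; lra).
  rewrite Rabs_mult.
  apply Rle_lt_trans with ((Rabs l + 1) * Rabs (z - y)).
  { apply Rmult_le_compat_r; auto. apply Rabs_pos. }
  apply Rmult_lt_reg_l with (/ (Rabs l + 1)). { apply Rinv_0_lt_compat; lra. }
  rewrite <- Rmult_assoc, Rinv_l by lra. unfold Rdiv in *. lra.
Qed.

Section MeanValue.

Variables (a b : R) (g g' : R -> R).
Hypothesis g_deriv : forall y, inD a b y -> deriv_within a b g y (g' y).

Lemma derivable_pt_lim_clamp u v c :
  a <= u -> v <= b -> u < c < v -> derivable_pt_lim (fun y => g (clamp u v y)) c (g' c).
Proof.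
  intros Hau Hvb Hc eps Heps.
  destruct (g_deriv c ltac:(unfold inD; lra) eps Heps) as [del [Hdel H]].
  assert (Hp : 0 < Rmin del (Rmin (c - u) (v - c))) by (apply Rmin_pos; auto; apply Rmin_pos; lra).
  exists (mkposreal _ Hp). intros h Hh0 Hh. simpl in Hh.
  pose proof (Rmin_l del (Rmin (c - u) (v - c))). pose proof (Rmin_r del (Rmin (c - u) (v - c))).
  pose proof (Rmin_l (c - u) (v - c)). pose proof (Rmin_r (c - u) (v - c)).
  assert (Hch : u <= c + h <= v) by (unfold Rabs in *; destruct Rcase_abs; lra).
  rewrite (clamp_id u v (c + h)), (clamp_id u v c) by lra.
  specialize (H (c + h) ltac:(unfold inD; lra) ltac:(intro E; apply Hh0; lra)).
  replace (c + h - c) with h in H by ring. apply H; lra.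
Qed.

Lemma continuity_pt_clamp u v c :
  a <= u -> v <= b -> u <= c <= v -> continuity_pt (fun y => g (clamp u v y)) c.
Proof.
  intros Hau Hvb Hc eps Heps.
  destruct (deriv_within_cont a b g c (g' c) (g_deriv c ltac:(unfold inD; lra)) eps Heps)
    as [del [Hdel H]].
  exists del. split; auto. intros y [_ Hy]. simpl in *. unfold R_dist in *.
  rewrite (clamp_id u v c) by auto.
  apply H.
  - pose proof (clamp_in u v y); unfold inD; lra.
  - replace (clamp u v y - c) with (clamp u v y - clamp u v c) by (rewrite (clamp_id u v c); auto).
    eapply Rle_lt_trans; [apply clamp_lipschitz; lra| auto].
Qed.

(* Clamping [g] to [[u, v]] turns the one-sided derivatives into honest ones
   on [(u, v)], to which Stdlib's [MVT] applies. *)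
Lemma mean_value_ineq u v L :
  inD a b u -> inD a b v -> u <= v ->
  (forall t, u <= t <= v -> Rabs (g' t) <= L) ->
  Rabs (g v - g u) <= L * (v - u).
Proof.
  intros Hu Hv Huv HL.
  destruct (Req_dec u v) as [<-|Hne].
  { rewrite !Rminus_diag, Rabs_R0. lra. }
  assert (Hlt : u < v) by lra.
  unfold inD in *.
  set (gc := fun y => g (clamp u v y)).
  assert (Hder : forall c, u < c < v -> derivable_pt_lim gc c (g' c))
    by (intros; apply derivable_pt_lim_clamp; lra).
  assert (pr1 : forall c, u < c < v -> derivable_pt gc c).
  { intros c Hc. exists (g' c). apply Hder; auto. }
  assert (pr2 : forall c, u < c < v -> derivable_pt id c).
  { intros c Hc. apply derivable_pt_id. }
  destruct (MVT gc id u v pr1 pr2 Hlt (fun c Hc => continuity_pt_clamp u v c ltac:(lra) ltac:(lra) Hc)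
             (fun c _ => derivable_continuous_pt id c (derivable_pt_id c))) as [c [P HP]].
  rewrite (derive_pt_eq_0 gc c (g' c) (pr1 c P) (Hder c P)) in HP.
  rewrite (derive_pt_eq_0 id c 1 (pr2 c P) (derivable_pt_lim_id c)) in HP.
  unfold gc, id in HP. rewrite (clamp_id u v u), (clamp_id u v v) in HP by lra.
  replace (g v - g u) with ((v - u) * g' c) by lra.
  rewrite Rabs_mult, Rabs_right by lra.
  rewrite Rmult_comm. apply Rmult_le_compat_r; [lra|]. apply HL; lra.
Qed.

Lemma mean_value_ineq_abs u v L :
  inD a b u -> inD a b v ->
  (forall t, Rmin u v <= t <= Rmax u v -> Rabs (g' t) <= L) ->
  Rabs (g v - g u) <= L * Rabs (v - u).
Proof.
  intros Hu Hv HL.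
  destruct (Rle_dec u v).
  - rewrite (Rabs_right (v - u)) by lra. apply mean_value_ineq; auto.
    intros t Ht; apply HL. rewrite Rmin_left, Rmax_right; lra.
  - rewrite Rabs_minus_sym, (Rabs_minus_sym v u), (Rabs_right (u - v)) by lra.
    apply mean_value_ineq; auto; try lra.
    intros t Ht; apply HL. rewrite Rmin_right, Rmax_left; lra.
Qed.

End MeanValue.

Lemma powerRZ2_exp z : powerRZ 2 z = exp (IZR z * ln 2).
Proof. rewrite powerRZ_Rpower by lra. reflexivity. Qed.

Lemma powerRZ2_pos z : 0 < powerRZ 2 z.
Proof. apply powerRZ_lt; lra. Qed.

Lemma powerRZ2_add z1 z2 : powerRZ 2 (z1 + z2) = powerRZ 2 z1 * powerRZ 2 z2.
Proof. apply powerRZ_add; lra. Qed.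

Lemma exists_pow2_bracket y : 0 < y -> exists e : Z, powerRZ 2 (e - 1) <= y < powerRZ 2 e.
Proof.
  intros Hy. pose proof ln2_pos.
  set (r := ln y / ln 2). exists (up r).
  destruct (archimed r) as [H1 H2].
  rewrite !powerRZ2_exp, <- (exp_ln y) by auto.
  replace (ln y) with (r * ln 2) by (unfold r; field; lra).
  rewrite minus_IZR. split.
  - destruct (Req_dec (IZR (up r) - 1) r) as [E|E].
    + rewrite E; lra.
    + left. apply exp_increasing. apply Rmult_lt_compat_r; lra.
  - apply exp_increasing. apply Rmult_lt_compat_r; lra.
Qed.

Lemma is_float_opp m z : is_float m z -> is_float m (- z).
Proof.
  intros [s [e [Hs ->]]]. exists (- s)%Z, e. split.
  - rewrite Z.abs_opp; auto.
  - rewrite opp_IZR; ring.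
Qed.

Lemma is_float_pow2 m e : (1 <= m)%nat -> is_float m (powerRZ 2 e).
Proof.
  intros Hm. exists 1%Z, (e + Z.of_nat m)%Z. split.
  - assert (2 ^ Z.of_nat m >= 2)%Z.
    { replace (Z.of_nat m) with (1 + Z.of_nat (m - 1))%Z by lia.
      rewrite Z.pow_add_r by lia. pose proof (Z.pow_pos_nonneg 2 (Z.of_nat (m-1))). lia. }
    simpl; lia.
  - f_equal. rewrite Rmult_1_l. f_equal. lia.
Qed.

(* In the binade [[2^(e-1), 2^e)] the floats of precision [m] are spaced
   [2^(e-m)] apart; the nearest multiple of the spacing is a float unless it
   is [2^e] itself, which is a float as well. *)
Lemma exists_float_near m t e : (1 <= m)%nat -> powerRZ 2 (e - 1) <= t < powerRZ 2 e ->
  exists z, is_float m z /\ Rabs (z - t) <= powerRZ 2 (e - 1) / 2 ^ m.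
Proof.
  intros Hm [Ht1 Ht2].
  set (sp := powerRZ 2 (e - Z.of_nat m)).
  assert (Hsp : 0 < sp) by apply powerRZ2_pos.
  assert (Hpm : 0 < 2 ^ m) by (apply pow_lt; lra).
  assert (Hsp2 : powerRZ 2 e = 2 ^ m * sp).
  { unfold sp. rewrite pow_powerRZ, <- powerRZ2_add. f_equal; lia. }
  assert (Hhalf : powerRZ 2 (e - 1) / 2 ^ m = sp / 2).
  { replace (e - 1)%Z with (e + (-1))%Z by lia. rewrite powerRZ2_add, Hsp2.
    simpl powerRZ. field. lra. }
  rewrite Hhalf.
  set (q := t / sp).
  assert (Hq : q < 2 ^ m).
  { unfold q. apply Rmult_lt_reg_r with sp; auto. unfold Rdiv.
    rewrite Rmult_assoc, Rinv_l by lra. lra. }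
  assert (Hq0 : 0 < q).
  { unfold q; apply Rdiv_lt_0_compat; auto.
    eapply Rlt_le_trans; [apply powerRZ2_pos|apply Ht1]. }
  set (s := up (q - 1/2)).
  destruct (archimed (q - 1/2)) as [A1 A2]. fold s in A1, A2.
  assert (Hsq : Rabs (IZR s * sp - t) <= sp / 2).
  { replace (IZR s * sp - t) with ((IZR s - q) * sp) by (unfold q; field; lra).
    rewrite Rabs_mult, (Rabs_right sp) by lra.
    assert (Rabs (IZR s - q) <= 1/2) by (unfold Rabs; destruct Rcase_abs; lra).
    apply Rle_trans with (1/2 * sp); [apply Rmult_le_compat_r; lra | lra]. }
  assert (Hs0 : (0 <= s)%Z).
  { assert (IZR (-1) < IZR s) by lra. apply lt_IZR in H. lia. }
  assert (Hsm : (s <= 2 ^ Z.of_nat m)%Z).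
  { assert (IZR s < IZR (2 ^ Z.of_nat m) + 1) by (rewrite <- pow_IZR; lra).
    rewrite <- plus_IZR in H. apply lt_IZR in H. lia. }
  destruct (Z.eq_dec s (2 ^ Z.of_nat m)) as [E|E].
  - exists (powerRZ 2 e). split; [apply is_float_pow2; auto|].
    rewrite Hsp2, pow_IZR, <- E. auto.
  - exists (IZR s * sp). split; auto.
    exists s, e. split; [lia| reflexivity].
Qed.

(* The error is at most half a spacing, and the power of two below [|y|]
   is a float, so [|rd m y|] cannot fall below it. *)
Lemma rounding_rel_err rd m y : is_rounding rd -> (1 <= m)%nat ->
  Rabs (rd m y - y) <= Rabs (rd m y) / 2 ^ m.
Proof.
  intros Hrd Hm. destruct (Hrd m y) as [Hf Hmin].
  assert (Hpm : 0 < 2 ^ m) by (apply pow_lt; lra).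
  destruct (Req_dec y 0) as [->|Hy0].
  { assert (H0 : is_float m 0) by (exists 0%Z, 0%Z; split; [simpl; lia| simpl; ring]).
    specialize (Hmin 0 H0). rewrite Rminus_0_r in *.
    rewrite Rminus_0_l, Rabs_Ropp, Rabs_R0 in Hmin.
    pose proof (Rabs_pos (rd m 0)).
    replace (Rabs (rd m 0)) with 0 by lra. unfold Rdiv; lra. }
  set (t := Rabs y). assert (Ht : 0 < t) by (apply Rabs_pos_lt; auto).
  destruct (exists_pow2_bracket t Ht) as [e He].
  set (sg := if Rle_dec 0 y then 1 else -1).
  assert (Hsg : forall z, Rabs (sg * z - y) = Rabs (z - t)).
  { intros z. unfold sg, t. destruct Rle_dec.
    - rewrite (Rabs_right y) by lra. f_equal; ring.
    - rewrite (Rabs_left y) by lra. rewrite <- Rabs_Ropp. f_equal; ring. }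
  assert (Hfl : forall z, is_float m z -> is_float m (sg * z)).
  { intros z Hz. unfold sg. destruct Rle_dec.
    - rewrite Rmult_1_l; auto.
    - replace (-1 * z) with (- z) by ring. apply is_float_opp; auto. }
  destruct (exists_float_near m t e Hm He) as [z [Hz Hzt]].
  pose proof (Hmin (sg * z) (Hfl z Hz)) as H1. rewrite Hsg in H1.
  pose proof (Hmin (sg * powerRZ 2 (e - 1)) (Hfl _ (is_float_pow2 m _ Hm))) as H2.
  rewrite Hsg in H2.
  assert (Hbig : powerRZ 2 (e - 1) <= Rabs (rd m y)).
  { destruct (Rle_dec (powerRZ 2 (e - 1)) (Rabs (rd m y))) as [|Hn]; auto.
    exfalso. destruct He as [He1 He2].
    rewrite (Rabs_minus_sym (powerRZ 2 (e-1))), (Rabs_right (t - powerRZ 2 (e - 1))) in H2 by lra.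
    pose proof (Rabs_triang_inv y (rd m y)).
    rewrite (Rabs_minus_sym (rd m y)) in H2. fold t in H. lra. }
  eapply Rle_trans; [apply H1|]. eapply Rle_trans; [apply Hzt|].
  unfold Rdiv. apply Rmult_le_compat_r; [left; apply Rinv_0_lt_compat; auto| auto].
Qed.

Lemma psum_ext g h n : (forall k, (k < n)%nat -> g k = h k) -> psum g n = psum h n.
Proof.
  induction n; simpl; intros H; auto.
  rewrite IHn by (intros; apply H; lia). rewrite H by lia. auto.
Qed.

Lemma psum_le g h n : (forall k, (k < n)%nat -> g k <= h k) -> psum g n <= psum h n.
Proof.
  induction n; simpl; intros H; [lra|].
  apply Rplus_le_compat; [apply IHn; intros; apply H; lia| apply H; lia].
Qed.

Lemma psum_scal c g n : psum (fun k => c * g k) n = c * psum g n.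
Proof. induction n; simpl; [ring| rewrite IHn; ring]. Qed.

Lemma psum_const c n : psum (fun _ => c) n = c * INR n.
Proof. induction n; simpl psum; [simpl; ring|]. rewrite IHn, S_INR; ring. Qed.

Lemma psum_nonneg g n : (forall j, 0 <= g j) -> 0 <= psum g n.
Proof. intros H. induction n; simpl; [lra|]. pose proof (H n); lra. Qed.

Lemma psum_ge_term g k n : (forall j, 0 <= g j) -> (k < n)%nat -> g k <= psum g n.
Proof.
  intros H. induction n; intros Hk; [lia|]. simpl.
  destruct (Nat.eq_dec k n) as [->|].
  - pose proof (psum_nonneg g n H). lra.
  - pose proof (H n). assert (g k <= psum g n) by (apply IHn; lia). lra.
Qed.

Lemma psum_geometric_le q n : 1 < q -> psum (fun k => q ^ (n - k)) (S n) <= q ^ (S n) / (q - 1).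
Proof.
  intros Hq.
  assert (Hgeo : psum (fun k => q ^ (n - k)) (S n) * (q - 1) = q ^ (S n) - 1).
  { induction n as [|n IH]; [simpl; ring|].
    change (psum (fun k => q ^ (S n - k)) (S (S n))) with
      (psum (fun k => q ^ (S n - k)) (S n) + q ^ (S n - S n)).
    rewrite (psum_ext (fun k => q ^ (S n - k)) (fun k => q * q ^ (n - k))).
    2: { intros k Hk. replace (S n - k)%nat with (S (n - k)) by lia. reflexivity. }
    rewrite psum_scal, Nat.sub_diag.
    replace ((q * psum (fun k => q ^ (n - k)) (S n) + q ^ 0) * (q - 1)) with
      (q * (psum (fun k => q ^ (n - k)) (S n) * (q - 1)) + (q - 1)) by (simpl; ring).
    rewrite IH. simpl. ring. }
  apply Rmult_le_reg_r with (q - 1); [lra|].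
  unfold Rdiv. rewrite Rmult_assoc, Rinv_l by lra. lra.
Qed.

Fixpoint prod_range (mu : nat -> R) (k n : nat) : R :=
  match n with
  | O => 1
  | S n' => if (k <=? n')%nat then prod_range mu k n' * mu n' else 1
  end.

Lemma prod_range_S mu k n : (k <= n)%nat -> prod_range mu k (S n) = prod_range mu k n * mu n.
Proof. intros H. simpl. destruct (Nat.leb_spec k n); [reflexivity| lia]. Qed.

Lemma prod_range_nil mu n : prod_range mu n n = 1.
Proof.
  destruct n as [|n]; [reflexivity|].
  change (prod_range mu (S n) (S n))
    with (if (S n <=? n)%nat then prod_range mu (S n) n * mu n else 1).
  rewrite (proj2 (Nat.leb_gt (S n) n)) by lia. reflexivity.
Qed.

Lemma prod_range_split mu k r n : (k <= r)%nat -> (r < n)%nat ->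
  prod_range mu k n = prod_range mu k r * mu r * prod_range mu (S r) n.
Proof.
  intros H1 H2. induction n as [|n IH]; [lia|].
  destruct (Nat.eq_dec r n) as [->|Hne].
  - rewrite prod_range_S, prod_range_nil by lia. ring.
  - rewrite prod_range_S, IH, (prod_range_S mu (S r) n) by lia. ring.
Qed.

Lemma prod_range_nonneg mu k n : (forall j, (k <= j < n)%nat -> 0 <= mu j) -> 0 <= prod_range mu k n.
Proof.
  intros H. induction n; simpl; [lra|].
  destruct (Nat.leb_spec k n); [|lra].
  apply Rmult_le_pos; [apply IHn; intros; apply H; lia| apply H; lia].
Qed.

Definition log_sum (a : nat -> R) (n : nat) := psum (fun j => ln (a j)) n.

Lemma prod_range_le_exp_log_sum mu a d k n : (k <= n)%nat -> 0 <= d ->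
  (forall j, (k <= j < n)%nat -> 0 <= mu j /\ 0 < a j /\ mu j <= (1 + d) * a j) ->
  prod_range mu k n <= (1 + d) ^ (n - k) * exp (log_sum a n - log_sum a k).
Proof.
  intros Hk Hd H. induction n as [|n IH].
  - replace k with 0%nat by lia. simpl. rewrite Rminus_diag, exp_0. lra.
  - destruct (Nat.eq_dec k (S n)) as [->|Hne].
    { rewrite prod_range_nil, Nat.sub_diag, Rminus_diag, exp_0. simpl; lra. }
    rewrite prod_range_S by lia.
    destruct (H n ltac:(lia)) as [H1 [H2 H3]].
    pose proof (IH ltac:(lia) ltac:(intros; apply H; lia)) as IH'.
    replace (S n - k)%nat with (S (n - k)) by lia.
    replace (log_sum a (S n) - log_sum a k) with ((log_sum a n - log_sum a k) + ln (a n))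
      by (unfold log_sum; simpl; ring).
    rewrite exp_plus, exp_ln by auto. simpl pow.
    assert (0 <= prod_range mu k n) by (apply prod_range_nonneg; intros j Hj; apply (H j); lia).
    apply Rle_trans with ((1 + d) ^ (n - k) * exp (log_sum a n - log_sum a k) * ((1 + d) * a n)).
    + apply Rmult_le_compat; auto.
    + right; ring.
Qed.

Lemma exists_last_below (P : nat -> Prop) k n :
  (exists j, (k <= j < n)%nat /\ P j) ->
  exists r, (k <= r < n)%nat /\ P r /\ forall j, (r < j < n)%nat -> ~ P j.
Proof.
  induction n as [|n IH]; intros [j [Hj HP]]; [lia|].
  destruct (classic (P n)) as [Hn|Hn].
  - exists n. split; [lia| split; auto]. intros; lia.
  - destruct IH as [r [Hr [HPr Hr2]]].
    { exists j. split; auto. assert (j <> n) by (intro; subst; auto). lia. }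
    exists r. split; [lia| split; auto]. intros j' Hj'.
    destruct (Nat.eq_dec j' n) as [->|]; auto. apply Hr2; lia.
Qed.

Definition slope_bounded (s : nat -> R) (lp eta : R) (N : nat) : Prop :=
  forall r n, (r <= n)%nat -> (n <= N)%nat -> s n - s r <= lp * INR (n - r) + eta.

Section GeometricProducts.

Variables (mu a : nat -> R) (d lp eta : R).
Hypotheses (d_ge0 : 0 <= d) (lp_ge0 : 0 <= lp).

Lemma prod_range_le_geometric_of_close n k :
  (k <= n)%nat ->
  (forall j, (k <= j < n)%nat -> 0 <= mu j /\ 0 < a j /\ mu j <= (1 + d) * a j) ->
  log_sum a n - log_sum a k <= lp * INR (n - k) + eta ->
  prod_range mu k n <= ((1 + d) * exp lp) ^ (n - k) * exp eta.
Proof.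
  intros Hk Hmu HS.
  apply Rle_trans with ((1 + d) ^ (n - k) * exp (log_sum a n - log_sum a k)); [apply prod_range_le_exp_log_sum; auto|].
  rewrite Rpow_mult_distr, <- exp_INR_mult, Rmult_assoc, <- exp_plus.
  apply Rmult_le_compat_l; [apply pow_le; lra|].
  destruct (Rle_dec (log_sum a n - log_sum a k) (INR (n - k) * lp + eta)) as [Hl|Hl].
  - destruct Hl; [left; apply exp_increasing; auto| right; f_equal; auto].
  - exfalso. lra.
Qed.

(* Each factor is either close to [(1 + d) a j] or below [beta]; cutting at
   the last small factor and using [beta * exp eta <= 1] to absorb the extra
   [exp eta] yields the bound by induction on [n]. *)
Lemma prod_range_le_geometric beta n :
  0 <= beta -> beta * exp eta <= 1 ->
  (forall j, (j < n)%nat -> 0 <= mu j /\ 0 < a j /\ (mu j <= (1 + d) * a j \/ mu j <= beta)) ->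
  slope_bounded (log_sum a) lp eta n ->
  forall k, (k <= n)%nat -> prod_range mu k n <= ((1 + d) * exp lp) ^ (n - k) * exp eta.
Proof.
  intros Hb Hbe.
  induction n as [n IHn] using (well_founded_induction lt_wf).
  intros Hmu HS k Hk.
  set (q := (1 + d) * exp lp).
  assert (Hq1 : 1 <= q) by (unfold q; pose proof (exp_ge_1 lp lp_ge0); nra).
  destruct (classic (exists j, (k <= j < n)%nat /\ ~ (mu j <= (1 + d) * a j))) as [Hex|Hno].
  2: { apply prod_range_le_geometric_of_close; auto.
       intros j Hj. destruct (Hmu j ltac:(lia)) as [? [? _]]. repeat split; auto.
       apply NNPP. intro Hc. apply Hno. exists j; split; auto. }
  destruct (exists_last_below _ k n Hex) as [r [Hr [HBr Hr2]]].
  rewrite (prod_range_split mu k r n) by lia.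
  assert (Hmr : 0 <= mu r <= beta)
    by (destruct (Hmu r ltac:(lia)) as [? [_ [?|?]]]; [contradiction| auto]).
  assert (IHr : prod_range mu k r <= q ^ (r - k) * exp eta).
  { apply IHn; [lia| | |lia].
    - intros j Hj; apply Hmu; lia.
    - intros r' n' ? ?; apply HS; lia. }
  assert (Htail : prod_range mu (S r) n <= q ^ (n - S r) * exp eta).
  { apply prod_range_le_geometric_of_close; [lia| |apply HS; lia].
    intros j Hj. destruct (Hmu j ltac:(lia)) as [? [? _]]. repeat split; auto.
    apply NNPP. intro Hc. apply (Hr2 j); [lia| auto]. }
  assert (HP1 : 0 <= prod_range mu k r) by (apply prod_range_nonneg; intros j Hj; apply Hmu; lia).
  assert (HP2 : 0 <= prod_range mu (S r) n) by (apply prod_range_nonneg; intros j Hj; apply Hmu; lia).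
  pose proof (exp_pos eta).
  assert (Hqp : 0 <= q ^ (r - k)) by (apply pow_le; lra).
  assert (Hqp2 : 0 <= q ^ (n - S r)) by (apply pow_le; lra).
  apply Rle_trans with ((q ^ (r - k) * exp eta) * beta * (q ^ (n - S r) * exp eta)).
  { apply Rmult_le_compat; [apply Rmult_le_pos; lra| auto| apply Rmult_le_compat; lra| auto]. }
  replace ((q ^ (r - k) * exp eta) * beta * (q ^ (n - S r) * exp eta)) with
    ((q ^ (r - k) * q ^ (n - S r)) * exp eta * (beta * exp eta)) by ring.
  rewrite <- pow_add.
  assert (Hpw : q ^ (r - k + (n - S r)) <= q ^ (n - k)) by (apply Rle_pow; [auto| lia]).
  assert (0 <= q ^ (r - k + (n - S r))) by (apply pow_le; lra).
  apply Rle_trans with (q ^ (r - k + (n - S r)) * exp eta * 1).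
  { apply Rmult_le_compat_l; [apply Rmult_le_pos; lra| auto]. }
  rewrite Rmult_1_r. apply Rmult_le_compat_r; lra.
Qed.

End GeometricProducts.

Lemma le_sum_prod_range_of_recursion (e mu : nat -> R) c0 :
  (forall j, 0 <= mu j) -> e 0%nat <= c0 -> (forall n, e (S n) <= mu n * e n + c0) ->
  forall n, e n <= c0 * psum (fun k => prod_range mu k n) (S n).
Proof.
  intros Hmu H0 HS n. induction n as [|n IH]; [simpl; lra|].
  change (psum (fun k => prod_range mu k (S n)) (S (S n))) with
    (psum (fun k => prod_range mu k (S n)) (S n) + prod_range mu (S n) (S n)).
  rewrite prod_range_nil.
  rewrite (psum_ext (fun k => prod_range mu k (S n)) (fun k => mu n * prod_range mu k n))
    by (intros k Hk; rewrite prod_range_S by lia; ring).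
  rewrite psum_scal.
  eapply Rle_trans; [apply HS|].
  assert (mu n * e n <= mu n * (c0 * psum (fun k => prod_range mu k n) (S n)))
    by (apply Rmult_le_compat_l; auto).
  lra.
Qed.

Definition Dbound (a b : R) := Rmax (Rabs a) (Rabs b).

Lemma abs_le_Dbound a b y : inD a b y -> Rabs y <= Dbound a b.
Proof.
  unfold inD, Dbound; intros H.
  pose proof (Rmax_l (Rabs a) (Rabs b)). pose proof (Rmax_r (Rabs a) (Rabs b)).
  pose proof (Rle_abs b). pose proof (Rle_abs (-a)). rewrite Rabs_Ropp in *.
  unfold Rabs at 1; destruct Rcase_abs; lra.
Qed.

Lemma Dbound_pos a b : a < b -> 0 < Dbound a b.
Proof.
  intros Hab. unfold Dbound. destruct (Req_dec a 0).
  - eapply Rlt_le_trans; [| apply Rmax_r]. apply Rabs_pos_lt. lra.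
  - eapply Rlt_le_trans; [| apply Rmax_l]. apply Rabs_pos_lt. auto.
Qed.

Lemma orbit_inD a b f x n :
  (forall y, inD a b y -> inD a b (f y)) -> inD a b x -> inD a b (orbit f x n).
Proof. intros Hf Hx; induction n; simpl; auto. Qed.

Lemma minabs_le f x N n : (n <= N)%nat -> minabs f x N <= Rabs (orbit f x n).
Proof.
  induction N; intros H.
  - replace n with 0%nat by lia. simpl. lra.
  - simpl minabs. destruct (Nat.eq_dec n (S N)) as [->|Hne].
    + apply Rmin_r.
    + eapply Rle_trans; [apply Rmin_l| apply IHN; lia].
Qed.

Lemma minabs_pos f x N : (forall n, orbit f x n <> 0) -> 0 < minabs f x N.
Proof.
  intros H. induction N; simpl minabs.
  - apply Rabs_pos_lt. apply (H 0%nat).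
  - apply Rmin_glb_lt; auto. apply Rabs_pos_lt. apply (H (S N)).
Qed.

Lemma tol_pos p : 0 < tol p.
Proof.
  unfold tol. assert (0 < powerRZ 10 (- p)) by (apply powerRZ_lt; lra).
  apply Rdiv_lt_0_compat; lra.
Qed.

Definition err_amplification (d lp eta : R) (N : nat) : R :=
  let q := (1 + d) * exp lp in exp eta * q ^ (S N) / (q - 1).

Lemma err_amplification_pos d lp eta N : 0 < d -> 0 <= lp -> 0 < err_amplification d lp eta N.
Proof.
  intros Hd Hlp. unfold err_amplification. pose proof (exp_ge_1 lp Hlp).
  apply Rdiv_lt_0_compat; [apply Rmult_lt_0_compat; [apply exp_pos| apply pow_lt]|]; nra.
Qed.

Lemma err_amplification_le d lp eta N :
  0 < d -> 0 <= lp -> err_amplification d lp eta N <= exp (eta + (d + lp) * INR (S N)) / d.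
Proof.
  intros Hd Hlp. unfold err_amplification. set (q := (1 + d) * exp lp).
  pose proof (exp_ge_1 lp Hlp).
  assert (Hq1 : d <= q - 1) by (unfold q; nra).
  rewrite exp_plus, (Rmult_comm (d + lp)), exp_INR_mult.
  assert (Hqe : q ^ S N <= exp (d + lp) ^ S N).
  { apply pow_incr. split; [unfold q; nra|].
    unfold q. rewrite exp_plus. apply Rmult_le_compat_r; [lra|].
    pose proof (exp_ineq1_le d). lra. }
  assert (/ (q - 1) <= / d) by (apply Rinv_le_contravar; lra).
  assert (0 <= q ^ S N) by (apply pow_le; unfold q; nra).
  unfold Rdiv. rewrite !Rmult_assoc. apply Rmult_le_compat_l; [left; apply exp_pos|].
  apply Rmult_le_compat; auto. left; apply Rinv_0_lt_compat; lra.
Qed.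

Lemma step_factor_close_or_small a0 c e E d :
  0 < d -> 0 <= c -> 0 <= e -> e <= E ->
  a0 + c * e <= (1 + d) * a0 \/ a0 + c * e <= (1 + 1 / d) * c * E.
Proof.
  intros Hd Hc He HeE.
  destruct (Rle_dec (c * e) (d * a0)) as [Hle|Hgt]; [left; lra| right].
  assert (a0 <= c * e / d).
  { apply Rmult_le_reg_l with d; auto. unfold Rdiv.
    replace (d * (c * e * / d)) with (c * e) by (field; lra). lra. }
  assert (c * e <= c * E) by (apply Rmult_le_compat_l; auto).
  assert (c * e / d <= c * E / d)
    by (unfold Rdiv; apply Rmult_le_compat_r; [left; apply Rinv_0_lt_compat|]; lra).
  replace ((1 + 1 / d) * c * E) with (c * E / d + c * E) by (field; lra).
  lra.
Qed.

Lemma xhat_0 f rd Lbar m x : xhat f rd Lbar m x 0 = rd m x.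
Proof. reflexivity. Qed.

Lemma ebar_0 f rd Lbar m x : ebar f rd Lbar m x 0 = Rabs (rd m x) / 2 ^ m.
Proof. reflexivity. Qed.

Lemma xhat_S f rd Lbar m x n :
  xhat f rd Lbar m x (S n) = rd m (f (xhat f rd Lbar m x n)).
Proof. reflexivity. Qed.

Lemma ebar_S f rd Lbar m x n :
  ebar f rd Lbar m x (S n) =
  Lbar (xhat f rd Lbar m x n) (ebar f rd Lbar m x n) * ebar f rd Lbar m x n
  + Rabs (xhat f rd Lbar m x (S n)) / 2 ^ m.
Proof. reflexivity. Qed.

Section ComputedOrbit.

Variables (a b B K Lmax : R) (f f1 f2 : R -> R) (Lbar : R -> R -> R) (rd : nat -> R -> R) (x : R).
Hypotheses (f_maps : forall y, inD a b y -> inD a b (f y))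
  (f_deriv : forall y, inD a b y -> deriv_within a b f y (f1 y))
  (f1_deriv : forall y, inD a b y -> deriv_within a b f1 y (f2 y))
  (f2_bound : forall y, inD a b y -> Rabs (f2 y) <= B) (B_ge0 : 0 <= B) (K_ge0 : 0 <= K)
  (Lbar_valid : valid_Lbar a b f1 Lbar Lmax K) (rd_rounding : is_rounding rd) (x_inD : inD a b x).

Lemma Lset_lub_le hh ee z0 :
  inD a b hh -> 0 <= ee -> inD a b z0 -> Rabs (hh - z0) <= ee ->
  exists l, is_lub (Lset a b f1 hh ee) l /\ 0 <= l /\ l <= Rabs (f1 z0) + 2 * B * ee.
Proof.
  intros Hh He Hz Hhz.
  assert (Hbd : forall w, Lset a b f1 hh ee w -> w <= Rabs (f1 z0) + 2 * B * ee).
  { intros w [y [Hy [Hy2 ->]]].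
    assert (Rabs (f1 y - f1 z0) <= B * Rabs (y - z0)).
    { apply (mean_value_ineq_abs a b f1 f2); auto.
      intros t Ht. apply f2_bound. eapply inD_between; [apply Hz|apply Hy|auto]. }
    assert (Rabs (y - z0) <= 2 * ee).
    { replace (y - z0) with ((y - hh) + (hh - z0)) by ring.
      eapply Rle_trans; [apply Rabs_triang|].
      assert (Rabs (y - hh) <= ee) by (unfold Rabs; destruct Rcase_abs; lra). lra. }
    pose proof (Rabs_triang_inv (f1 y) (f1 z0)).
    assert (B * Rabs (y - z0) <= B * (2 * ee)) by (apply Rmult_le_compat_l; auto). lra. }
  assert (Hhh : Lset a b f1 hh ee (Rabs (f1 hh)))
    by (exists hh; split; [auto| split; [lra| reflexivity]]).
  destruct (completeness (Lset a b f1 hh ee)) as [l Hl].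
  { exists (Rabs (f1 z0) + 2 * B * ee). intros w Hw; apply Hbd; auto. }
  { eexists; eauto. }
  exists l. split; auto. split.
  - apply Rle_trans with (Rabs (f1 hh)); [apply Rabs_pos| apply Hl; auto].
  - apply Hl. intros w Hw; apply Hbd; auto.
Qed.

Section OneStep.

Variables (hh ee z0 : R).
Hypotheses (hh_inD : inD a b hh) (ee_ge0 : 0 <= ee) (z0_inD : inD a b z0)
  (hh_close : Rabs (hh - z0) <= ee).

Lemma Lbar_ge0 : 0 <= Lbar hh ee.
Proof.
  destruct (Lset_lub_le hh ee z0) as [l [Hl [Hl0 _]]]; auto.
  destruct (Lbar_valid hh ee l Hl). lra.
Qed.

Lemma Lbar_le_deriv : Lbar hh ee <= Rabs (f1 z0) + (2 * B + K) * ee.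
Proof.
  destruct (Lset_lub_le hh ee z0) as [l [Hl [_ Hl2]]]; auto.
  destruct (Lbar_valid hh ee l Hl) as [_ HL2].
  pose proof (Rmin_r Lmax (l + K * ee)). lra.
Qed.

Lemma f_diff_le_Lbar : Rabs (f hh - f z0) <= Lbar hh ee * ee.
Proof.
  destruct (Lset_lub_le hh ee z0) as [l [Hl [Hl0 _]]]; auto.
  destruct (Lbar_valid hh ee l Hl) as [HL1 _].
  assert (Rabs (f hh - f z0) <= l * Rabs (hh - z0)).
  { apply (mean_value_ineq_abs a b f f1); auto.
    intros t Ht. apply Hl. exists t. split; [eapply inD_between; [apply z0_inD| apply hh_inD| auto]|].
    split; [| reflexivity].
    unfold Rmin, Rmax in Ht; unfold Rabs in *; repeat destruct Rcase_abs;
      repeat destruct Rle_dec; lra. }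
  eapply Rle_trans; [eassumption|].
  apply Rmult_le_compat; auto; apply Rabs_pos.
Qed.

End OneStep.

Variables (m : nat).
Hypotheses (m_ge1 : (1 <= m)%nat) (xhat_inD : forall n, inD a b (xhat f rd Lbar m x n)).

Lemma ebar_bounds_error n :
  0 <= ebar f rd Lbar m x n /\ Rabs (xhat f rd Lbar m x n - orbit f x n) <= ebar f rd Lbar m x n.
Proof.
  assert (Hpm : 0 < 2 ^ m) by (apply pow_lt; lra).
  assert (Hdiv : forall y, 0 <= Rabs y / 2 ^ m)
    by (intros y; unfold Rdiv; apply Rmult_le_pos; [apply Rabs_pos| left; apply Rinv_0_lt_compat; auto]).
  induction n as [|n [IH1 IH2]].
  { rewrite xhat_0, ebar_0. split; auto. apply rounding_rel_err; auto. }
  set (hh := xhat f rd Lbar m x n) in *. set (ee := ebar f rd Lbar m x n) in *.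
  pose proof (orbit_inD a b f x n f_maps x_inD) as Hxo.
  rewrite ebar_S, xhat_S. fold hh ee. simpl orbit. split.
  - pose proof (Lbar_ge0 hh ee (orbit f x n) (xhat_inD n) IH1 Hxo IH2).
    apply Rplus_le_le_0_compat; auto. apply Rmult_le_pos; lra.
  - replace (rd m (f hh) - f (orbit f x n)) with
      ((rd m (f hh) - f hh) + (f hh - f (orbit f x n))) by ring.
    eapply Rle_trans; [apply Rabs_triang|].
    rewrite Rplus_comm. apply Rplus_le_compat; [| apply rounding_rel_err; auto].
    apply f_diff_le_Lbar; auto. apply xhat_inD.
Qed.

Lemma ebar_S_le n :
  ebar f rd Lbar m x (S n) <=
    (Rabs (f1 (orbit f x n)) + (2 * B + K) * ebar f rd Lbar m x n) * ebar f rd Lbar m x n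
    + Dbound a b / 2 ^ m.
Proof.
  destruct (ebar_bounds_error n) as [H1 H2].
  pose proof (orbit_inD a b f x n f_maps x_inD) as Hxo.
  rewrite ebar_S. apply Rplus_le_compat.
  - apply Rmult_le_compat_r; auto. apply Lbar_le_deriv; auto.
  - unfold Rdiv. apply Rmult_le_compat_r; [left; apply Rinv_0_lt_compat, pow_lt; lra|].
    apply abs_le_Dbound; auto.
Qed.


Hypotheses (orbit_nonzero : forall n, orbit f x n <> 0)
  (deriv_orbit_nonzero : forall n, f1 (orbit f x n) <> 0).

Lemma ebar_le_sum_prod_range n :
  let mu j := Rabs (f1 (orbit f x j)) + (2 * B + K) * ebar f rd Lbar m x j in
  ebar f rd Lbar m x n <= Dbound a b / 2 ^ m * psum (fun k => prod_range mu k n) (S n).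
Proof.
  intros mu.
  apply (le_sum_prod_range_of_recursion (ebar f rd Lbar m x) mu).
  - intros j. unfold mu. destruct (ebar_bounds_error j).
    apply Rplus_le_le_0_compat; [apply Rabs_pos| apply Rmult_le_pos; lra].
  - rewrite ebar_0. unfold Rdiv. apply Rmult_le_compat_r; [left; apply Rinv_0_lt_compat, pow_lt; lra|].
    apply abs_le_Dbound. rewrite <- (xhat_0 f rd Lbar m x). auto.
  - intros j. pose proof (ebar_S_le j). unfold mu. lra.
Qed.

(* While [ebar] stays below [E], each step multiplies the error by at most
   [(1 + d) |f'(x_j)|], unless [|f'(x_j)|] is so small that the whole factor is
   below [(1 + 1/d) (2B + K) E]; by [prod_range_le_geometric] the bound [E]
   then propagates. *)
Lemma ebar_le_uniform d lp eta N :
  0 < d -> 0 <= lp ->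
  slope_bounded (log_sum (fun j => Rabs (f1 (orbit f x j)))) lp eta N ->
  let E := Dbound a b * err_amplification d lp eta N / 2 ^ m in
  (1 + 1 / d) * (2 * B + K) * E * exp eta <= 1 ->
  forall n, (n <= N)%nat -> ebar f rd Lbar m x n <= E.
Proof.
  intros Hd Hlp HS E HE.
  set (a0 := fun j => Rabs (f1 (orbit f x j))).
  set (e := fun n => ebar f rd Lbar m x n).
  set (c := 2 * B + K).
  set (mu := fun j => a0 j + c * e j).
  set (q := (1 + d) * exp lp).
  assert (Hpm : 0 < 2 ^ m) by (apply pow_lt; lra).
  assert (Hq : 1 < q) by (unfold q; pose proof (exp_ge_1 lp Hlp); nra).
  assert (HM : 0 <= Dbound a b) by (eapply Rle_trans; [apply Rabs_pos| apply abs_le_Dbound, x_inD]).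
  assert (HE0 : 0 <= E).
  { unfold E. pose proof (err_amplification_pos d lp eta N Hd Hlp).
    unfold Rdiv; apply Rmult_le_pos; [apply Rmult_le_pos| left; apply Rinv_0_lt_compat]; lra. }
  assert (Hc : 0 <= c) by (unfold c; lra).
  assert (He0 : forall j, 0 <= e j) by (intros j; apply ebar_bounds_error).
  intros n. induction n as [n IHn] using (well_founded_induction lt_wf). intros HnN.
  assert (Hcls : forall j, (j < n)%nat -> 0 <= mu j /\ 0 < a0 j /\
             (mu j <= (1 + d) * a0 j \/ mu j <= (1 + 1 / d) * c * E)).
  { intros j Hj. pose proof (He0 j).
    split; [unfold mu, a0; pose proof (Rabs_pos (f1 (orbit f x j))); nra|].
    split; [unfold a0; apply Rabs_pos_lt; auto|].
    apply step_factor_close_or_small; auto. apply IHn; lia. }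
  assert (Hb0 : 0 <= (1 + 1 / d) * c * E).
  { assert (0 < 1 / d) by (apply Rdiv_lt_0_compat; lra).
    apply Rmult_le_pos; [apply Rmult_le_pos|]; lra. }
  pose proof (prod_range_le_geometric mu a0 d lp eta (Rlt_le _ _ Hd) Hlp _ n Hb0 HE Hcls
               (fun r n' H1 H2 => HS r n' H1 ltac:(lia))) as HPr.
  eapply Rle_trans; [apply ebar_le_sum_prod_range|]. fold a0 c e mu.
  assert (Hsum : psum (fun k => prod_range mu k n) (S n) <= err_amplification d lp eta N).
  { apply Rle_trans with (psum (fun k => exp eta * q ^ (n - k)) (S n)).
    - apply psum_le. intros k Hk. rewrite Rmult_comm. apply HPr. lia.
    - rewrite psum_scal. unfold err_amplification. fold q.
      unfold Rdiv. rewrite Rmult_assoc. apply Rmult_le_compat_l; [left; apply exp_pos|].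
      eapply Rle_trans; [apply psum_geometric_le; auto|].
      unfold Rdiv. apply Rmult_le_compat_r; [left; apply Rinv_0_lt_compat; lra|].
      apply Rle_pow; [lra| lia]. }
  unfold E. replace (Dbound a b * err_amplification d lp eta N / 2 ^ m) with
    (Dbound a b / 2 ^ m * err_amplification d lp eta N) by (field; lra).
  apply Rmult_le_compat_l; auto.
  unfold Rdiv; apply Rmult_le_pos; [auto| left; apply Rinv_0_lt_compat; auto].
Qed.

(* [|xhat_n| >= minabs - ebar_n], and [t (minabs - E) >= E] is exactly [E (1 + t) <= t minabs]. *)
Lemma good_of_ebar_le N p E :
  (forall n, (n <= N)%nat -> ebar f rd Lbar m x n <= E) ->
  E * (1 + tol p) <= tol p * minabs f x N ->
  good f rd Lbar x N p m.
Proof.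
  intros HE Hmin n Hn.
  destruct (ebar_bounds_error n) as [He0 Hval].
  pose proof (HE n Hn). pose proof (minabs_le f x N n Hn). pose proof (tol_pos p).
  assert (Habs : minabs f x N - ebar f rd Lbar m x n <= Rabs (xhat f rd Lbar m x n)).
  { pose proof (Rabs_triang_inv (orbit f x n) (xhat f rd Lbar m x n)).
    rewrite Rabs_minus_sym in Hval. lra. }
  assert (ebar f rd Lbar m x n * (1 + tol p) <= tol p * minabs f x N).
  { eapply Rle_trans; [| apply Hmin]. apply Rmult_le_compat_r; lra. }
  assert (tol p * (minabs f x N - ebar f rd Lbar m x n) <= tol p * Rabs (xhat f rd Lbar m x n))
    by (apply Rmult_le_compat_l; lra).
  nra.
Qed.

Definition precision_threshold (d lp eta t : R) (N : nat) : R :=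
  Dbound a b * err_amplification d lp eta N *
    ((1 + 1 / d) * (2 * B + K) * exp eta + (1 + t) / (t * minabs f x N)).

Lemma good_of_precision_threshold d lp eta N p :
  0 < d -> 0 <= lp ->
  slope_bounded (log_sum (fun j => Rabs (f1 (orbit f x j)))) lp eta N ->
  precision_threshold d lp eta (tol p) N <= 2 ^ m ->
  good f rd Lbar x N p m.
Proof.
  unfold precision_threshold. intros Hd Hlp HS Hm.
  set (G := Dbound a b * err_amplification d lp eta N) in *.
  set (t := tol p) in *. set (mn := minabs f x N) in *.
  set (A := (1 + 1 / d) * (2 * B + K) * exp eta) in *.
  assert (Hpm : 0 < 2 ^ m) by (apply pow_lt; lra).
  assert (HG : 0 <= G).
  { unfold G. pose proof (err_amplification_pos d lp eta N Hd Hlp).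
    pose proof (abs_le_Dbound a b x x_inD). pose proof (Rabs_pos x). nra. }
  assert (Ht : 0 < t) by apply tol_pos.
  assert (Hmn : 0 < mn) by (apply minabs_pos; auto).
  assert (HA : 0 <= A).
  { unfold A. assert (0 < 1 / d) by (apply Rdiv_lt_0_compat; lra).
    pose proof (exp_pos eta). apply Rmult_le_pos; [apply Rmult_le_pos|]; lra. }
  assert (HB : 0 <= (1 + t) / (t * mn))
    by (unfold Rdiv; apply Rmult_le_pos; [lra| left; apply Rinv_0_lt_compat; nra]).
  apply (good_of_ebar_le N p (G / 2 ^ m)).
  - apply ebar_le_uniform; auto. fold G.
    apply Rmult_le_reg_r with (2 ^ m); auto. rewrite Rmult_1_l.
    replace ((1 + 1 / d) * (2 * B + K) * (G / 2 ^ m) * exp eta * 2 ^ m) with (G * A)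
      by (unfold A; field; lra).
    assert (0 <= G * ((1 + t) / (t * mn))) by (apply Rmult_le_pos; auto). nra.
  - fold t mn. apply Rmult_le_reg_r with (2 ^ m / (t * mn)); [apply Rdiv_lt_0_compat; nra|].
    replace (G / 2 ^ m * (1 + t) * (2 ^ m / (t * mn))) with (G * ((1 + t) / (t * mn)))
      by (field; repeat split; lra).
    replace (t * mn * (2 ^ m / (t * mn))) with (2 ^ m) by (field; lra).
    assert (0 <= G * A) by (apply Rmult_le_pos; auto). nra.
Qed.

End ComputedOrbit.

Lemma is_limsup_of_bounded (u : nat -> R) lo hi : (forall n, lo <= u n <= hi) -> exists l, is_limsup u l.
Proof.
  intros Hb.
  assert (Hv : forall N, {v | is_lub (fun w => exists n, (N <= n)%nat /\ w = u n) v}).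
  { intros N. apply completeness.
    - exists hi. intros w [n [_ ->]]. apply Hb.
    - exists (u N). exists N. split; auto. }
  set (v := fun N => proj1_sig (Hv N)).
  assert (Hvp : forall N, is_lub (fun w => exists n, (N <= n)%nat /\ w = u n) (v N)).
  { intros N. unfold v. destruct (Hv N); auto. }
  destruct (completeness (fun w => exists N, w = - v N)) as [L HL].
  { exists (- lo). intros w [N ->]. apply Ropp_le_contravar.
    apply Rle_trans with (u N); [apply Hb| apply (Hvp N); exists N; split; auto]. }
  { exists (- v 0%nat). exists 0%nat. auto. }
  exists (- L).
  assert (Hge : forall N, - L <= v N).
  { intros N. assert (- v N <= L) by (apply HL; exists N; auto). lra. }
  split.
  - intros eps Heps.
    destruct (classic (exists N, v N <= - L + eps)) as [[N HN]|Hno].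
    + exists N. intros n Hn. apply Rle_trans with (v N); auto. apply (Hvp N). exists n; split; auto.
    + exfalso. assert (L <= L - eps); [|lra].
      apply HL. intros w [N ->].
      assert (~ v N <= - L + eps) by (intro; apply Hno; exists N; auto). lra.
  - intros eps Heps N.
    destruct (classic (exists n, (N <= n)%nat /\ - L - eps <= u n)) as [H|Hno]; auto.
    exfalso. assert (v N <= v N - eps); [|lra].
    apply (Hvp N). intros w [n [Hn1 ->]].
    assert (~ - L - eps <= u n) by (intro; apply Hno; exists n; auto).
    pose proof (Hge N). lra.
Qed.

Lemma is_limsup_le u w l1 l2 : (forall n, u n <= w n) -> is_limsup u l1 -> is_limsup w l2 -> l1 <= l2.
Proof.
  intros H [U1 U2] [W1 W2].
  destruct (Rle_dec l1 l2) as [|Hnn]; auto. exfalso.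
  set (eps := (l1 - l2) / 3).
  assert (Heps : 0 < eps) by (unfold eps; lra).
  destruct (W1 eps Heps) as [N HN].
  destruct (U2 eps Heps N) as [n [Hn Hu]].
  pose proof (HN n Hn). pose proof (H n). unfold eps in *. lra.
Qed.

Lemma Un_cv_le_is_limsup u w lam l : (forall n, w n <= u n) -> Un_cv w lam -> is_limsup u l -> lam <= l.
Proof.
  intros H Hcv [U1 U2].
  destruct (Rle_dec lam l) as [|Hnn]; auto. exfalso.
  set (eps := (lam - l) / 3).
  assert (Heps : 0 < eps) by (unfold eps; lra).
  destruct (U1 eps Heps) as [N1 HN1].
  destruct (Hcv eps Heps) as [N2 HN2].
  pose proof (HN1 (max N1 N2) ltac:(lia)). pose proof (HN2 (max N1 N2) ltac:(lia)).
  pose proof (H (max N1 N2)). unfold R_dist, Rabs in *. destruct Rcase_abs; unfold eps in *; lra.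
Qed.

Lemma ln_le_eta al y : 0 < al -> 0 < y -> ln y <= eta al y.
Proof. intros Ha Hy. unfold eta. destruct Rle_dec; [lra|]. left. apply ln_increasing; lra. Qed.

Lemma eta_le_mono a1 a2 y : 0 < a1 -> a1 <= a2 -> 0 < y -> eta a1 y <= eta a2 y.
Proof. intros H1 H2 Hy. unfold eta. destruct (Rle_dec a1 y); destruct (Rle_dec a2 y); try lra; apply ln_le; lra. Qed.

Lemma eta_bounds al y Lm : 0 < al -> 0 < y -> y <= Lm -> ln al <= eta al y <= ln (Rmax al Lm).
Proof.
  intros Ha Hy HL. pose proof (Rmax_l al Lm). pose proof (Rmax_r al Lm).
  unfold eta. destruct Rle_dec; split; try lra; apply ln_le; lra.
Qed.

Lemma average_le (g h : nat -> R) n : (forall k, g k <= h k) -> psum g n / INR n <= psum h n / INR n.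
Proof.
  intros H. destruct n as [|n]; [simpl; lra|].
  unfold Rdiv. apply Rmult_le_compat_r; [left; apply Rinv_0_lt_compat, lt_0_INR; lia|].
  apply psum_le; auto.
Qed.

Lemma average_bounds (g : nat -> R) lo hi n : (forall k, lo <= g k <= hi) ->
  Rmin lo 0 <= psum g n / INR n <= Rmax hi 0.
Proof.
  intros H. destruct n as [|n].
  { simpl. unfold Rdiv. rewrite Rmult_0_l. split; [apply Rmin_r| apply Rmax_r]. }
  assert (Hn : 0 < INR (S n)) by (apply lt_0_INR; lia).
  assert (H1 : psum (fun _ => lo) (S n) <= psum g (S n)) by (apply psum_le; intros; apply H).
  assert (H2 : psum g (S n) <= psum (fun _ => hi) (S n)) by (apply psum_le; intros; apply H).
  rewrite psum_const in H1, H2. split.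
  - apply Rle_trans with lo; [apply Rmin_l|].
    apply Rmult_le_reg_r with (INR (S n)); auto. unfold Rdiv. rewrite Rmult_assoc, Rinv_l by lra. lra.
  - apply Rle_trans with hi; [| apply Rmax_l].
    apply Rmult_le_reg_r with (INR (S n)); auto. unfold Rdiv. rewrite Rmult_assoc, Rinv_l by lra. lra.
Qed.

(* [alpha |-> lambdabar_alpha] is nondecreasing and bounded below by [lam],
   so its limit at [0+] is its infimum. *)
Lemma exists_lambda_bar_ge (a0 : nat -> R) Lm lam :
  (forall k, 0 < a0 k <= Lm) ->
  Un_cv (fun n => psum (fun k => ln (a0 k)) n / INR n) lam ->
  exists lb, lam <= lb /\
    exists la : R -> R,
    (forall alpha, 0 < alpha ->
       is_limsup (fun n => psum (fun k => eta alpha (a0 k)) n / INR n) (la alpha)) /\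
    (forall eps, 0 < eps -> exists del, 0 < del /\
       forall alpha, 0 < alpha < del -> Rabs (la alpha - lb) < eps).
Proof.
  intros Ha Hcv.
  set (u := fun al n => psum (fun k => eta al (a0 k)) n / INR n).
  assert (Hex : forall al, exists l, 0 < al -> is_limsup (u al) l).
  { intros al. destruct (Rlt_dec 0 al) as [Hal|Hal]; [| exists 0; intros; lra].
    destruct (is_limsup_of_bounded (u al) (Rmin (ln al) 0) (Rmax (ln (Rmax al Lm)) 0)) as [l Hl].
    { intros n. unfold u. apply average_bounds. intros k. apply eta_bounds; auto; apply Ha. }
    exists l; auto. }
  set (la := fun al => proj1_sig (constructive_indefinite_description _ (Hex al))).
  assert (Hla : forall al, 0 < al -> is_limsup (u al) (la al)).
  { intros al Hal. unfold la. destruct (constructive_indefinite_description _ (Hex al)); auto. }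
  assert (Hlam : forall al, 0 < al -> lam <= la al).
  { intros al Hal. apply (Un_cv_le_is_limsup (u al) (fun n => psum (fun k => ln (a0 k)) n / INR n)); auto.
    intros n. unfold u. apply average_le. intros k. apply ln_le_eta; auto; apply Ha. }
  assert (Hmono : forall a1 a2, 0 < a1 -> a1 <= a2 -> la a1 <= la a2).
  { intros a1 a2 H1 H2. apply (is_limsup_le (u a1) (u a2)); auto; [|apply Hla; lra].
    intros n. unfold u. apply average_le. intros k. apply eta_le_mono; auto; apply Ha. }
  destruct (completeness (fun w => exists al, 0 < al /\ w = - la al)) as [L HL].
  { exists (- lam). intros w [al [Hal ->]]. pose proof (Hlam al Hal). lra. }
  { exists (- la 1). exists 1. split; auto; lra. }
  assert (Hge : forall al, 0 < al -> - L <= la al).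
  { intros al Hal. assert (- la al <= L) by (apply HL; exists al; auto). lra. }
  exists (- L). split.
  { assert (L <= - lam); [| lra]. apply HL. intros w [al [Hal ->]]. pose proof (Hlam al Hal). lra. }
  exists la. split; auto.
  intros eps Heps.
  destruct (classic (exists al, 0 < al /\ la al < - L + eps)) as [[al [Hal Hl]]|Hno].
  - exists al. split; auto. intros a1 [Ha1 Ha2].
    pose proof (Hmono a1 al Ha1 ltac:(lra)). pose proof (Hge a1 Ha1).
    rewrite Rabs_right by lra. lra.
  - exfalso. assert (L <= L - eps); [| lra]. apply HL. intros w [al [Hal ->]].
    assert (~ la al < - L + eps) by (intro; apply Hno; exists al; auto). lra.
Qed.

Lemma dev_from_linear_le (s : nat -> R) lam : Un_cv (fun n => s n / INR n) lam -> s 0%nat = 0 ->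
  forall c, 0 < c -> exists C0, 0 <= C0 /\ forall n, Rabs (s n - lam * INR n) <= c * INR n + C0.
Proof.
  intros Hcv H0 c Hc. destruct (Hcv c Hc) as [n1 Hn1].
  set (dev := fun k => Rabs (s k - lam * INR k)).
  assert (Hdev : forall k, 0 <= dev k) by (intros; apply Rabs_pos).
  exists (psum dev n1). split; [apply psum_nonneg; auto|].
  intros n. pose proof (pos_INR n). pose proof (psum_nonneg dev n1 Hdev).
  destruct (le_lt_dec n1 n) as [Hle|Hlt].
  - destruct n as [|n].
    { simpl. rewrite H0. replace (0 - lam * 0) with 0 by ring. rewrite Rabs_R0. lra. }
    specialize (Hn1 (S n) ltac:(lia)). unfold R_dist in Hn1.
    assert (Hp : 0 < INR (S n)) by (apply lt_0_INR; lia).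
    replace (s (S n) - lam * INR (S n)) with (INR (S n) * (s (S n) / INR (S n) - lam)) by (field; lra).
    rewrite Rabs_mult, Rabs_right by lra.
    assert (INR (S n) * Rabs (s (S n) / INR (S n) - lam) <= INR (S n) * c)
      by (apply Rmult_le_compat_l; lra).
    lra.
  - pose proof (psum_ge_term dev n n1 Hdev Hlt). unfold dev in *.
    assert (0 <= c * INR n) by (apply Rmult_le_pos; lra). lra.
Qed.

Lemma slope_bounded_of_Un_cv (s : nat -> R) lam : Un_cv (fun n => s n / INR n) lam -> s 0%nat = 0 ->
  forall c, 0 < c ->
  exists C0, 0 <= C0 /\ forall N, slope_bounded s (Rmax 0 lam) (2 * c * INR N + 2 * C0) N.
Proof.
  intros Hcv H0 c Hc. destruct (dev_from_linear_le s lam Hcv H0 c Hc) as [C0 [HC0 HC]].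
  exists C0. split; auto. intros N r n Hr Hn.
  pose proof (HC n) as Hc1. pose proof (HC r) as Hc2.
  rewrite minus_INR by auto.
  apply le_INR in Hr, Hn. pose proof (pos_INR r).
  pose proof (Rmax_l 0 lam). pose proof (Rmax_r 0 lam).
  assert (lam * (INR n - INR r) <= Rmax 0 lam * (INR n - INR r)) by (apply Rmult_le_compat_r; lra).
  unfold Rabs in Hc1, Hc2.
  destruct (Rcase_abs (s n - lam * INR n)); destruct (Rcase_abs (s r - lam * INR r)); nra.
Qed.

Lemma inv_minabs_le_eventually f x : standing f x ->
  forall e1, 0 < e1 -> exists N2, forall N, (N2 <= N)%nat -> / minabs f x N <= exp (e1 * INR N * ln 2).
Proof.
  intros [Horb Hst] e1 He1. destruct (Hst e1 He1) as [N2 HN2].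
  exists (max N2 1). intros N HN. pose proof ln2_pos.
  assert (HNpos : 0 < INR N) by (apply lt_0_INR; lia).
  pose proof (minabs_pos f x N Horb) as Hmn.
  specialize (HN2 N ltac:(lia)). unfold R_dist in HN2. rewrite Rminus_0_r in HN2.
  assert (Hld : - e1 < ld (minabs f x N) / INR N) by (unfold Rabs in HN2; destruct Rcase_abs; lra).
  assert (Hlnmn : - (e1 * INR N * ln 2) < ln (minabs f x N)).
  { unfold ld in Hld. apply Rmult_lt_compat_r with (r := INR N * ln 2) in Hld; [|nra].
    replace (ln (minabs f x N) / ln 2 / INR N * (INR N * ln 2)) with (ln (minabs f x N)) in Hld
      by (field; lra). lra. }
  apply exp_increasing in Hlnmn. rewrite exp_ln, exp_Ropp in Hlnmn by auto.
  left. rewrite <- (Rinv_inv (exp _)). apply Rinv_lt_contravar; auto.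
  apply Rmult_lt_0_compat; [apply Rinv_0_lt_compat, exp_pos| auto].
Qed.

Section Threshold.

Variables (a b B K d lp eta t E : R) (f : R -> R) (x : R) (N : nat).
Hypotheses (a_lt_b : a < b) (B_ge0 : 0 <= B) (K_ge0 : 0 <= K)
  (orbit_nonzero : forall n, orbit f x n <> 0)
  (d_pos : 0 < d) (lp_ge0 : 0 <= lp) (eta_ge0 : 0 <= eta) (t_pos : 0 < t) (E_ge0 : 0 <= E).

Lemma precision_threshold_pos : 0 < precision_threshold a b B K f x d lp eta t N.
Proof.
  unfold precision_threshold.
  pose proof (Dbound_pos a b a_lt_b). pose proof (err_amplification_pos d lp eta N d_pos lp_ge0).
  pose proof (minabs_pos f x N orbit_nonzero). pose proof (exp_pos eta).
  assert (0 < 1 / d) by (apply Rdiv_lt_0_compat; lra).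
  assert (0 < (1 + t) / (t * minabs f x N)) by (apply Rdiv_lt_0_compat; nra).
  assert (0 <= (1 + 1 / d) * (2 * B + K) * exp eta) by (apply Rmult_le_pos; [apply Rmult_le_pos|]; lra).
  apply Rmult_lt_0_compat; [apply Rmult_lt_0_compat|]; lra.
Qed.

Lemma ln_precision_threshold_le :
  / minabs f x N <= exp E ->
  ln (precision_threshold a b B K f x d lp eta t N) <=
    ln (Dbound a b / d * ((1 + 1 / d) * (2 * B + K) + (1 + t) / t))
    + 2 * eta + (d + lp) * INR (S N) + E.
Proof.
  intros HmnE.
  set (M := Dbound a b).
  set (A := (1 + 1 / d) * (2 * B + K)). set (Bc := (1 + t) / t).
  pose proof (Dbound_pos a b a_lt_b) as HM. fold M in HM.
  pose proof (minabs_pos f x N orbit_nonzero) as Hmn.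
  assert (HA : 0 <= A) by (unfold A; assert (0 < 1 / d) by (apply Rdiv_lt_0_compat; lra); nra).
  assert (HBc : 0 < Bc) by (unfold Bc; apply Rdiv_lt_0_compat; lra).
  assert (HK1 : 0 < M / d * (A + Bc)) by (apply Rmult_lt_0_compat; [apply Rdiv_lt_0_compat|]; lra).
  pose proof (exp_ge_1 eta eta_ge0). pose proof (exp_ge_1 E E_ge0).
  assert (Hamp : M * err_amplification d lp eta N <= M / d * exp (eta + (d + lp) * INR (S N))).
  { pose proof (err_amplification_le d lp eta N d_pos lp_ge0).
    replace (M / d * exp (eta + (d + lp) * INR (S N))) with (M * (exp (eta + (d + lp) * INR (S N)) / d))
      by (field; lra).
    apply Rmult_le_compat_l; lra. }
  assert (Hfac : A * exp eta + (1 + t) / (t * minabs f x N) <= (A + Bc) * exp (eta + E)).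
  { rewrite exp_plus.
    replace ((1 + t) / (t * minabs f x N)) with (Bc * / minabs f x N) by (unfold Bc; field; lra).
    assert (Bc * / minabs f x N <= Bc * exp E) by (apply Rmult_le_compat_l; lra).
    pose proof (exp_pos eta). pose proof (exp_pos E).
    assert (A * exp eta * 1 <= A * exp eta * exp E) by (apply Rmult_le_compat_l; nra).
    assert (Bc * 1 * exp E <= Bc * exp eta * exp E)
      by (apply Rmult_le_compat_r; [lra| apply Rmult_le_compat_l; lra]).
    lra. }
  eapply Rle_trans.
  { apply ln_le; [apply precision_threshold_pos|].
    unfold precision_threshold. fold M A.
    apply Rmult_le_compat; [| | apply Hamp| apply Hfac].
    - pose proof (err_amplification_pos d lp eta N d_pos lp_ge0). nra.
    - pose proof (exp_pos eta).
      assert (0 < (1 + t) / (t * minabs f x N)) by (apply Rdiv_lt_0_compat; nra). nra. }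
  replace (M / d * exp (eta + (d + lp) * INR (S N)) * ((A + Bc) * exp (eta + E)))
    with (M / d * (A + Bc) * exp (2 * eta + (d + lp) * INR (S N) + E))
    by (replace (2 * eta + (d + lp) * INR (S N) + E) with ((eta + (d + lp) * INR (S N)) + (eta + E)) by ring;
        rewrite exp_plus; ring).
  rewrite ln_mult, ln_exp by (auto || apply exp_pos). lra.
Qed.

End Threshold.

Lemma exists_precision_above X : 0 < X ->
  exists m, (1 <= m)%nat /\ X <= 2 ^ m /\ INR m <= Rmax 0 (ld X + 1) + 1.
Proof.
  intros HX. set (m := S (Z.to_nat (up (ld X)))).
  assert (Hm : ld X <= INR m /\ INR m <= Rmax 0 (ld X + 1) + 1).
  { unfold m. rewrite S_INR, INR_IZR_INZ, ZifyInst.of_nat_to_nat_eq.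
    destruct (archimed (ld X)) as [H1 H2].
    pose proof (Rmax_l 0 (ld X + 1)). pose proof (Rmax_r 0 (ld X + 1)).
    destruct (Z.max_spec 0 (up (ld X))) as [[Hz ->]|[Hz ->]]; [lra|].
    assert (IZR (up (ld X)) <= 0) by (apply IZR_le; lia). lra. }
  exists m. split; [unfold m; lia|]. split; [apply pow2_ge_of_ld; tauto| tauto].
Qed.

Lemma precision_le_linear X Kc lp tau (N m : nat) :
  0 < tau -> 0 <= lp ->
  ln X <= Kc + (lp + tau * ln 2 / 2) * INR N ->
  2 * Rabs Kc / ln 2 + 6 <= tau * INR N ->
  INR m <= Rmax 0 (ld X + 1) + 1 ->
  INR m <= (lp / ln 2 + tau) * INR N.
Proof.
  intros Htau Hlp HlnX HtauN Hm. pose proof ln2_pos.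
  assert (HN : 0 <= INR N) by apply pos_INR.
  assert (Hld : ld X <= Kc / ln 2 + lp / ln 2 * INR N + tau / 2 * INR N).
  { unfold ld, Rdiv. apply Rmult_le_reg_r with (ln 2); auto.
    replace ((Kc * / ln 2 + lp * / ln 2 * INR N + tau * / 2 * INR N) * ln 2) with
      (Kc + lp * INR N + tau * ln 2 / 2 * INR N) by (field; lra).
    replace (ln X * / ln 2 * ln 2) with (ln X) by (field; lra). lra. }
  assert (Kc / ln 2 <= Rabs Kc / ln 2)
    by (unfold Rdiv; apply Rmult_le_compat_r; [left; apply Rinv_0_lt_compat; lra| apply Rle_abs]).
  assert (0 <= Rabs Kc / ln 2)
    by (unfold Rdiv; apply Rmult_le_pos; [apply Rabs_pos| left; apply Rinv_0_lt_compat; lra]).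
  assert (0 <= lp / ln 2 * INR N)
    by (unfold Rdiv; apply Rmult_le_pos; [apply Rmult_le_pos; [lra| left; apply Rinv_0_lt_compat; lra]| lra]).
  rewrite Rmult_plus_distr_r.
  unfold Rmax in Hm. destruct Rle_dec; lra.
Qed.

Section Asymptotics.

Variables (a b B K Lmax : R) (f f1 f2 : R -> R) (Lbar : R -> R -> R) (rd : nat -> R -> R) (x : R).
Hypotheses (a_lt_b : a < b) (f_maps : forall y, inD a b y -> inD a b (f y))
  (f_deriv : forall y, inD a b y -> deriv_within a b f y (f1 y))
  (f1_deriv : forall y, inD a b y -> deriv_within a b f1 y (f2 y))
  (f2_bound : forall y, inD a b y -> Rabs (f2 y) <= B) (B_ge0 : 0 <= B) (K_ge0 : 0 <= K)
  (Lbar_valid : valid_Lbar a b f1 Lbar Lmax K) (rd_rounding : is_rounding rd) (x_inD : inD a b x)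
  (xhat_inD : forall m n, (1 <= m)%nat -> inD a b (xhat f rd Lbar m x n))
  (x_standing : standing f x) (deriv_orbit_nonzero : forall n, f1 (orbit f x n) <> 0).

(* [ln] of the threshold is [(lp + 4 e1) N + O(1)]: [exp eta] enters twice and
   costs [e1 N] each time, the slack [(1 + d)^(N+1)] another [e1 N], and
   [1 / minabs] at most [e1 N ln 2] by the Standing Assumption; [e1] is chosen
   so that [4 e1 / ln 2 = tau / 2]. *)
Lemma eventually_good_precision p lam :
  Un_cv (fun n => psum (fun k => ln (Rabs (f1 (orbit f x k)))) n / INR n) lam ->
  forall tau, 0 < tau -> exists N0, forall N, (N0 <= N)%nat ->
    exists m, (1 <= m)%nat /\ good f rd Lbar x N p m /\ INR m <= (Rmax 0 lam / ln 2 + tau) * INR N.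
Proof.
  intros Hcv tau Htau.
  pose proof ln2_pos as Hl2. pose proof ln2_lt_1 as Hl21.
  set (e1 := tau * ln 2 / 8).
  assert (He1 : 0 < e1) by (unfold e1; apply Rdiv_lt_0_compat; [apply Rmult_lt_0_compat|]; lra).
  set (lp := Rmax 0 lam). assert (Hlp : 0 <= lp) by apply Rmax_l.
  destruct (slope_bounded_of_Un_cv (log_sum (fun j => Rabs (f1 (orbit f x j)))) lam Hcv eq_refl
              (e1 / 2) ltac:(lra)) as [C0 [HC0 HS]].
  destruct (inv_minabs_le_eventually f x x_standing e1 He1) as [N2 HN2].
  set (t := tol p). assert (Ht : 0 < t) by apply tol_pos.
  set (K1 := Dbound a b / e1 * ((1 + 1 / e1) * (2 * B + K) + (1 + t) / t)).
  set (Kc := ln K1 + 4 * C0 + e1 + lp).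
  destruct (INR_unbounded ((2 * Rabs Kc / ln 2 + 6) / tau)) as [N3 HN3].
  exists (max (max N2 N3) 1). intros N HN.
  assert (HNpos : 1 <= INR N) by (replace 1 with (INR 1) by reflexivity; apply le_INR; lia).
  assert (HtauN : 2 * Rabs Kc / ln 2 + 6 <= tau * INR N).
  { assert (INR N3 <= INR N) by (apply le_INR; lia).
    apply Rmult_le_reg_r with (/ tau); [apply Rinv_0_lt_compat; lra|].
    replace (tau * INR N * / tau) with (INR N) by (field; lra). unfold Rdiv in HN3. lra. }
  set (eta := 2 * (e1 / 2) * INR N + 2 * C0).
  assert (Heta : 0 <= eta) by (unfold eta; nra).
  assert (HE : 0 <= e1 * INR N * ln 2) by (apply Rmult_le_pos; nra).
  set (X := precision_threshold a b B K f x e1 lp eta t N).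
  assert (HX : 0 < X) by (apply precision_threshold_pos; auto; apply x_standing).
  destruct (exists_precision_above X HX) as [m [Hm1 [HXm Hm]]].
  exists m. split; [auto| split].
  { apply (good_of_precision_threshold a b B K Lmax f f1 f2 Lbar rd x) with (d := e1) (lp := lp) (eta := eta);
      auto; [apply x_standing| apply HS]. }
  apply (precision_le_linear X Kc); auto.
  eapply Rle_trans.
  { apply ln_precision_threshold_le with (E := e1 * INR N * ln 2); auto;
      [apply x_standing| apply HN2; lia]. }
  fold t K1. unfold Kc, eta, e1. rewrite S_INR.
  assert (e1 * INR N * ln 2 <= e1 * INR N) by (rewrite Rmult_assoc; apply Rmult_le_compat_l; nra).
  unfold e1 in *. nra.
Qed.

End Asymptotics.

Lemma exists_least_nat (P : nat -> Prop) m :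
  P m -> exists m0, P m0 /\ (m0 <= m)%nat /\ forall m', (m' < m0)%nat -> ~ P m'.
Proof.
  induction m as [m IH] using (well_founded_induction lt_wf). intros Hm.
  destruct (classic (exists m', (m' < m)%nat /\ P m')) as [[m' [Hlt Hm']]|Hno].
  - destruct (IH m' Hlt Hm') as [m0 [H1 [H2 H3]]]. exists m0. repeat split; auto. lia.
  - exists m. repeat split; auto. intros m' Hm' Hc. apply Hno. exists m'; auto.
Qed.

Lemma sigma_le_of_eventually_good f rd Lbar x p s :
  (forall tau, 0 < tau -> exists N0, forall N, (N0 <= N)%nat ->
     exists m, (1 <= m)%nat /\ good f rd Lbar x N p m /\ INR m <= (s + tau) * INR N) ->
  sigma_le f rd Lbar x p s.
Proof.
  intros Hev del Hdel. destruct (Hev del Hdel) as [N0 HN0].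
  exists (max N0 1). intros N HN.
  destruct (HN0 N ltac:(lia)) as [m [Hm1 [Hgood Hbound]]].
  destruct (exists_least_nat (fun m => (1 <= m)%nat /\ good f rd Lbar x N p m) m (conj Hm1 Hgood))
    as [mm [[Hmm1 Hmm2] [Hmmle Hmin]]].
  exists mm. split.
  - repeat split; auto. intros m' H1 H2 Hc. apply (Hmin m' H2). split; auto.
  - assert (HNp : 0 < INR N) by (apply lt_0_INR; lia).
    apply le_INR in Hmmle.
    apply Rmult_le_reg_r with (INR N); auto.
    replace (INR mm / INR N * INR N) with (INR mm) by (field; lra). lra.
Qed.

Lemma abs_deriv_le_Lmax a b f1 Lbar Lmax K c :
  valid_Lbar a b f1 Lbar Lmax K -> inD a b c -> Rabs (f1 c) <= Lmax.
Proof.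
  intros HL Hc.
  assert (Hlub : is_lub (Lset a b f1 c 0) (Rabs (f1 c))).
  { split.
    - intros w [y [Hy [Hy2 ->]]]. replace y with c by lra. lra.
    - intros w Hw. apply Hw. exists c. split; [auto| split; [lra| reflexivity]]. }
  destruct (HL c 0 _ Hlub) as [H1 H2].
  pose proof (Rmin_l Lmax (Rabs (f1 c) + K * 0)). lra.
Qed.

Theorem mainTheorem10 (a b : R) (f f1 f2 : R -> R) (Lbar : R -> R -> R)
  (Lmax K : R) (rd : nat -> R -> R) (x : R) :
  a < b ->
  (forall y, inD a b y -> inD a b (f y)) ->
  (forall y, inD a b y -> deriv_within a b f y (f1 y)) ->
  (forall y, inD a b y -> deriv_within a b f1 y (f2 y)) ->
  (forall y, inD a b y -> cont_within a b f2 y) ->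
  (exists B, forall y, inD a b y -> Rabs (f2 y) <= B) ->
  0 <= Lmax -> 0 <= K -> valid_Lbar a b f1 Lbar Lmax K ->
  is_rounding rd ->
  (exists q : Q, x = Q2R q) -> inD a b x ->
  (forall m n, (1 <= m)%nat -> inD a b (xhat f rd Lbar m x n)) ->
  standing f x ->
  lyap_exists f f1 x ->
  exists lb, is_lambda_bar f f1 x lb /\
    forall eps, 0 < eps -> exists p0 : Z, forall p : Z, (p0 <= p)%Z ->
      sigma_le f rd Lbar x p (Rmax 0 lb / ln 2 + eps).
Proof.
  intros Hab Hf Hfd Hf1d _ [B HB] _ HK HL Hrd _ Hx Hh Hst [Hf1 [lam Hcv]].
  assert (HB0 : 0 <= B) by (eapply Rle_trans; [apply Rabs_pos| apply (HB b); unfold inD; lra]).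
  destruct (exists_lambda_bar_ge (fun k => Rabs (f1 (orbit f x k))) Lmax lam) as [lb [Hlamlb Hlb]];
    auto.
  { intros k. split; [apply Rabs_pos_lt; auto|].
    apply (abs_deriv_le_Lmax a b f1 Lbar Lmax K); auto. apply orbit_inD; auto. }
  exists lb. split; auto.
  intros eps Heps. exists 0%Z. intros p _.
  apply sigma_le_of_eventually_good. intros tau Htau.
  destruct (eventually_good_precision a b B K Lmax f f1 f2 Lbar rd x Hab Hf Hfd Hf1d HB HB0 HK HL Hrd
              Hx Hh Hst Hf1 p lam Hcv (eps + tau) ltac:(lra)) as [N0 HN0].
  exists N0. intros N HN. destruct (HN0 N HN) as [m [Hm1 [Hgood Hbound]]].
  exists m. repeat split; auto.
  assert (Rmax 0 lam / ln 2 <= Rmax 0 lb / ln 2).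
  { unfold Rdiv. apply Rmult_le_compat_r; [left; apply Rinv_0_lt_compat, ln2_pos|].
    unfold Rmax; repeat destruct Rle_dec; lra. }
  pose proof (pos_INR N). nra.
Qed.
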